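(* Let $(Y_t,X_t)_{t\ge1}$ be a hidden Markov model with finite state space $S=\{1,\dots,K\}$, $K>1$, and let $T\ge 1$. Let $C_1,C_2,C_3,C_4\ge 0$ with $C_1>0$ and $C_4>0$. For $x^T\in\mathcal X^T$ and $s^T\in S^T$ define the combined risk $$\mathcal R(s^T\mid x^T):=C_1\bar R_1(s^T|x^T)+C_2\bar R_\infty(s^T|x^T)+C_3\bar R_1(s^T)+C_4\bar R_\infty(s^T)\in[0,\infty].$$ Then for almost every realization $(x^T,y^T)$ of $(X^T,Y^T)$ (with respect to its joint law), $\min_{s^T\in S^T}\mathcal R(s^T\mid x^T)<\infty$, and every minimizer $s^T$ of $\mathcal R(\cdot\mid x^T)$ is admissible, i.e. satisfies $p(s^T|x^T)>0$.
   Context: Hidden Markov model: $Y=(Y_t)_{t\ge1}$ is a (possibly time-inhomogeneous) Markov chain on $S$ with initial distribution $\pi_j=\mathbf P(Y_1=j)$ and transition probabilities $p_{ij}$; given $Y$, the observations $X_t$ (taking values in a measurable space $(\mathcal X,\mathcal B)$) are conditionally independent, and the conditional law of $X_t$ depends on $Y$ only through $Y_t$, with density $f_s$ (w.r.t. a reference measure $\lambda$) when $Y_t=s$. Notation: $p(s^T)=\mathbf P(Y^T=s^T)$; $p(x^T,s^T)=p(s^T)\prod_{t=1}^T f_{s_t}(x_t)$; $p(x^T)=\sum_{s^T}p(x^T,s^T)$; $p(s^T|x^T)=p(x^T,s^T)/p(x^T)$; $p_t(s)=\mathbf P(Y_t=s)$; $p_t(s|x^T)=\mathbf P(Y_t=s\mid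 X^T=x^T)$. Risks (with $\log 0=-\infty$): $\bar R_1(s^T|x^T)=-\frac1T\sum_{t=1}^T\log p_t(s_t|x^T)$; $\bar R_\infty(s^T|x^T)=-\frac1T\log p(s^T|x^T)$; $\bar R_1(s^T)=-\frac1T\sum_{t=1}^T\log p_t(s_t)$; $\bar R_\infty(s^T)=-\frac1T\log p(s^T)$. *)

From HB Require Import structures.
From mathcomp Require Import all_boot all_order all_algebra.
From mathcomp Require Import all_classical all_reals all_analysis.
Set Implicit Arguments. Unset Strict Implicit. Unset Printing Implicit Defensive.
Import Order.TTheory GRing.Theory Num.Theory.
Local Open Scope ring_scope.
Local Open Scope classical_set_scope.

(* Time indices are 0-based: t : 'I_T stands for the paper's time t+1. *)

Definition prevo (T : nat) (t : 'I_T) : 'I_T :=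
  Ordinal (leq_ltn_trans (leq_pred t) (ltn_ord t)).

Section HMM.
Variables (R : realType) (S : finType).
(* initial distribution pi and (time-inhomogeneous) transitions:
   trans t i j = P(Y_{t+1} = j | Y_t = i)  (0-based times) *)
Variables (pi : S -> R) (trans : nat -> S -> S -> R).
Variables (d' : measure_display) (Xs : measurableType d').
Variable (f : S -> Xs -> R).

Definition pS (T : nat) (s : 'I_T -> S) : R :=
  \prod_(t < T) (if val t == 0%N then pi (s t)
                 else trans t.-1 (s (prevo t)) (s t)).

Definition pXS (T : nat) (x : 'I_T -> Xs) (s : 'I_T -> S) : R :=
  pS s * \prod_(t < T) f (s t) (x t).

Definition pX (T : nat) (x : 'I_T -> Xs) : R :=
  \sum_(s : {ffun 'I_T -> S}) pXS x s.

Definition post (T : nat) (x : 'I_T -> Xs) (s : 'I_T -> S) : R :=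
  pXS x s / pX x.

Definition marg (T : nat) (t : 'I_T) (i : S) : R :=
  \sum_(s : {ffun 'I_T -> S} | s t == i) pS s.

Definition post_marg (T : nat) (x : 'I_T -> Xs) (t : 'I_T) (i : S) : R :=
  (\sum_(s : {ffun 'I_T -> S} | s t == i) pXS x s) / pX x.

Definition nlog (p : R) : \bar R := if 0 < p then (- ln p)%:E else +oo%E.

Definition R1_post (T : nat) (x : 'I_T -> Xs) (s : 'I_T -> S) : \bar R :=
  ((T%:R)^-1)%:E * (\sum_(t < T) nlog (post_marg x t (s t)))%E.
Definition Rinf_post (T : nat) (x : 'I_T -> Xs) (s : 'I_T -> S) : \bar R :=
  ((T%:R)^-1)%:E * nlog (post x s).
Definition R1_prior (T : nat) (s : 'I_T -> S) : \bar R :=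
  ((T%:R)^-1)%:E * (\sum_(t < T) nlog (marg t (s t)))%E.
Definition Rinf_prior (T : nat) (s : 'I_T -> S) : \bar R :=
  ((T%:R)^-1)%:E * nlog (pS s).

Definition comb_risk (C1 C2 C3 C4 : R) (T : nat) (x : 'I_T -> Xs)
  (s : 'I_T -> S) : \bar R :=
  (C1%:E * R1_post x s + C2%:E * Rinf_post x s
   + C3%:E * R1_prior s + C4%:E * Rinf_prior s)%E.

Definition is_HMM (d : measure_display) (Om : measurableType d)
  (P : probability Om R) (lam : {measure set Xs -> \bar R})
  (Y : nat -> Om -> S) (X : nat -> Om -> Xs) : Prop :=
  [/\ (forall i, 0 <= pi i) /\ \sum_i pi i = 1,
      (forall t i j, 0 <= trans t i j) /\ (forall t i, \sum_j trans t i j = 1),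
      (forall i, measurable_fun setT (f i)) /\ (forall i x, 0 <= f i x)
        /\ (forall i, (\int[lam]_x (f i x)%:E = 1)%E),
      (forall t i, measurable [set w | Y t w = i]) /\
        (forall t, measurable_fun setT (X t)) &
      forall (n : nat) (s : 'I_n -> S) (B : 'I_n -> set Xs),
        (forall t, measurable (B t)) ->
        P [set w : Om | forall t : 'I_n, Y t w = s t /\ B t (X t w)]
        = ((pS s)%:E * \prod_(t < n) \int[lam]_(x in B t) (f (s t) x)%:E)%E].

End HMM.

From HB Require Import structures.
From mathcomp Require Import all_boot all_order all_algebra.
From mathcomp Require Import all_classical all_reals all_analysis.
Set Implicit Arguments. Unset Strict Implicit. Unset Printing Implicit Defensive.
Import Order.TTheory GRing.Theory Num.Theory.
Local Open Scope ring_scope.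
Local Open Scope classical_set_scope.

(* Almost surely the true hidden path y = Y^T(w) is supported by the data:
   p(y) > 0 and f_{y_t}(x_t) > 0 for all t, since for each fixed path the
   event where this fails is null under the finite-dimensional laws. Then
   p(x, y) > 0, so all the posterior and prior probabilities entering the
   risk of y are positive and that risk is finite; hence every minimizer s
   has finite risk. Finiteness of the C1 term gives p_t(s_t | x) > 0 for all
   t, which forces f_{s_t}(x_t) > 0, and finiteness of the C4 term gives
   p(s) > 0. Together p(x, s) > 0, i.e. p(s | x) > 0. *)

Lemma psumr_gt0 (R : numDomainType) (I : finType) (P : pred I) (F : I -> R)
    (i : I) :
  (forall j, P j -> 0 <= F j) -> P i -> 0 < F i -> 0 < \sum_(j | P j) F j.
Proof.
move=> F_ge0 Pi Fi_gt0; rewrite (bigD1 i) //=.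
by apply: ltr_wpDr => //; apply: sumr_ge0 => j /andP[/F_ge0].
Qed.

Section Nlog.
Variable R : realType.
Implicit Types p : R.

Lemma nlog_neq_ninfty p : nlog p != -oo%E.
Proof. by rewrite /nlog; case: ifP. Qed.

Lemma nlog_fin_num p : 0 < p -> nlog p \is a fin_num.
Proof. by rewrite /nlog => ->. Qed.

Lemma nlog_eq_pinfty p : (nlog p == +oo%E) = ~~ (0 < p).
Proof. by rewrite /nlog; case: ifP. Qed.

Lemma sum_nlog_neq_ninfty (T : nat) (g : 'I_T -> R) :
  (\sum_(t < T) nlog (g t) != -oo)%E.
Proof.
rewrite esum_eqNy; apply/existsP => -[t].
by rewrite (negbTE (nlog_neq_ninfty _)) andbF.
Qed.

Lemma sum_nlog_fin_num (T : nat) (g : 'I_T -> R) :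
  (forall t, 0 < g t) -> (\sum_(t < T) nlog (g t))%E \is a fin_num.
Proof.
move=> g_gt0; rewrite sum_fin_num; apply/allP => _ /mapP[t _ ->].
exact: nlog_fin_num.
Qed.

Lemma sum_nlog_neq_pinfty (T : nat) (g : 'I_T -> R) :
  (\sum_(t < T) nlog (g t) != +oo)%E -> forall t, 0 < g t.
Proof.
move=> sum_fin t; apply: contraNT sum_fin; rewrite -nlog_eq_pinfty => /eqP gt.
apply/eqP/esum_eqyP; first by move=> *; exact: nlog_neq_ninfty.
by exists t; rewrite mem_index_enum.
Qed.

End Nlog.

Lemma mule_ge0_neq_ninfty (R : realDomainType) (c : R) (e : \bar R) :
  0 <= c -> e != -oo%E -> (c%:E * e != -oo)%E.
Proof.
move=> c_ge0 e_fin; rewrite mule_eq_ninfty (negbTE e_fin) !andbF /=.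
by rewrite lte_fin ltNge c_ge0.
Qed.

Lemma pmule_neq_pinfty (R : realDomainType) (c : R) (e : \bar R) :
  0 < c -> (c%:E * e != +oo)%E -> e != +oo%E.
Proof. by move=> c_gt0; apply: contra => /eqP->; rewrite gt0_muley ?lte_fin. Qed.

Section Posterior.
Variables (R : realType) (S : finType) (pi : S -> R) (trans : nat -> S -> S -> R).
Variables (d' : measure_display) (Xs : measurableType d') (f : S -> Xs -> R).
Hypotheses (pi_ge0 : forall i, 0 <= pi i)
  (trans_ge0 : forall t i j, 0 <= trans t i j) (f_ge0 : forall i x, 0 <= f i x).
Variables (T : nat) (x : 'I_T -> Xs).

Lemma pS_ge0 (s : 'I_T -> S) : 0 <= pS pi trans s.
Proof. by apply: prodr_ge0 => t _; case: ifP. Qed.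

Lemma pXS_ge0 (s : 'I_T -> S) : 0 <= pXS pi trans f x s.
Proof. by apply: mulr_ge0; [exact: pS_ge0 | exact: prodr_ge0]. Qed.

Lemma pXS_gt0 (s : 'I_T -> S) :
  0 < pS pi trans s -> (forall t, 0 < f (s t) (x t)) -> 0 < pXS pi trans f x s.
Proof. by move=> pS_gt0 f_gt0; rewrite mulr_gt0 // prodr_gt0. Qed.

Lemma pX_gt0 (s : {ffun 'I_T -> S}) :
  0 < pXS pi trans f x s -> 0 < pX pi trans f x.
Proof. by apply: (psumr_gt0 (i := s)) => // s' _; exact: pXS_ge0. Qed.

Lemma post_gt0 (s : {ffun 'I_T -> S}) :
  0 < pXS pi trans f x s -> 0 < post pi trans f x s.
Proof. by move=> pXS_gt0; rewrite divr_gt0 // (pX_gt0 pXS_gt0). Qed.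

Lemma post_marg_gt0 (s : {ffun 'I_T -> S}) t :
  0 < pXS pi trans f x s -> 0 < post_marg pi trans f x t (s t).
Proof.
move=> pXS_gt0; rewrite divr_gt0 ?(pX_gt0 pXS_gt0) //.
by apply: (psumr_gt0 (i := s)) => // s' _; exact: pXS_ge0.
Qed.

Lemma marg_gt0 (s : {ffun 'I_T -> S}) t :
  0 < pS pi trans s -> 0 < marg pi trans t (s t).
Proof. by apply: (psumr_gt0 (i := s)) => // s' _; exact: pS_ge0. Qed.

Lemma post_marg_gt0_emission_gt0 t i :
  0 < post_marg pi trans f x t i -> 0 < f i (x t).
Proof.
move=> pm_gt0; rewrite lt_def f_ge0 andbT; apply: contraTneq pm_gt0 => fi0.
rewrite /post_marg big1 ?mul0r ?ltxx // => s /eqP sti.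
by rewrite /pXS (bigD1 t) //= sti fi0 mul0r mulr0.
Qed.

Variables C1 C2 C3 C4 : R.
Let risk := comb_risk pi trans f C1 C2 C3 C4 x.

Lemma comb_risk_fin_num (s : {ffun 'I_T -> S}) :
  0 < pS pi trans s -> 0 < pXS pi trans f x s -> risk s \is a fin_num.
Proof.
move=> pS_gt0 pXS_gt0.
have fin_scaled e : e \is a fin_num -> (((T%:R)^-1)%:E * e)%E \is a fin_num.
  exact: fin_numM.
rewrite !fin_numD !fin_numM ?fin_scaled ?nlog_fin_num ?sum_nlog_fin_num //.
- by move=> t; exact: marg_gt0.
- exact: post_gt0.
- by move=> t; exact: post_marg_gt0.
Qed.

Hypotheses (T_gt0 : (0 < T)%N) (C1_gt0 : 0 < C1) (C2_ge0 : 0 <= C2)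
  (C3_ge0 : 0 <= C3) (C4_gt0 : 0 < C4).

Lemma comb_risk_neq_pinfty_post_gt0 (s : {ffun 'I_T -> S}) :
  (risk s != +oo)%E -> 0 < post pi trans f x s.
Proof.
have Tinv_gt0 : 0 < (T%:R : R)^-1 by rewrite invr_gt0 ltr0n.
have scaled_neq_ninfty (c : R) (e : \bar R) : 0 <= c -> e != -oo%E ->
    (c%:E * (((T%:R)^-1)%:E * e) != -oo)%E.
  by move=> c_ge0 e_fin; do 2![apply: mule_ge0_neq_ninfty => //]; exact: ltW.
have C1_ge0 := ltW C1_gt0; have C4_ge0 := ltW C4_gt0.
rewrite /risk /comb_risk /R1_post /Rinf_post /R1_prior /Rinf_prior.
rewrite !adde_Neq_pinfty ?adde_eq_ninfty ?negb_or
  ?scaled_neq_ninfty ?sum_nlog_neq_ninfty ?nlog_neq_ninfty //.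
move=> /andP[/andP[/andP[R1_fin _] _] Rinf_fin].
have pm_fin := pmule_neq_pinfty Tinv_gt0 (pmule_neq_pinfty C1_gt0 R1_fin).
have pS_fin := pmule_neq_pinfty Tinv_gt0 (pmule_neq_pinfty C4_gt0 Rinf_fin).
have pm_gt0 := sum_nlog_neq_pinfty pm_fin.
apply: post_gt0 => //; apply: pXS_gt0 => //.
  by move: pS_fin; rewrite nlog_eq_pinfty negbK.
by move=> t; exact: post_marg_gt0_emission_gt0 (pm_gt0 t).
Qed.

Lemma comb_risk_minimizer_admissible (y : {ffun 'I_T -> S}) :
  0 < pS pi trans y -> (forall t, 0 < f (y t) (x t)) ->
  (\big[Order.min/+oo%E]_(s : {ffun 'I_T -> S}) risk s < +oo)%E /\
  forall s : {ffun 'I_T -> S},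
    (forall s' : {ffun 'I_T -> S}, risk s <= risk s')%E ->
    0 < post pi trans f x s.
Proof.
move=> pS_gt0 f_gt0.
have risk_y_lt : (risk y < +oo)%E.
  by rewrite ltey_eq comb_risk_fin_num // pXS_gt0.
split=> [|s s_min]; first by rewrite (bigD1 y) //= gt_min risk_y_lt.
by apply: comb_risk_neq_pinfty_post_gt0; rewrite -ltey (le_lt_trans (s_min y)).
Qed.

End Posterior.

Lemma ae_of_null_set (d : measure_display) (T : measurableType d)
    (R : realType) (mu : {measure set T -> \bar R}) (A : set T) (Q : T -> Prop) :
  measurable A -> mu A = 0%E -> (forall w, ~ Q w -> A w) ->
  {ae mu, forall w, Q w}.
Proof.
by move=> A_mes muA0 notQ_A; apply: negligibleS notQ_A _; exact/negligibleP.
Qed.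

Section TruePath.
Variables (R : realType) (S : finType) (pi : S -> R) (trans : nat -> S -> S -> R).
Variables (d' : measure_display) (Xs : measurableType d') (f : S -> Xs -> R).
Variables (lam : {measure set Xs -> \bar R}) (d : measure_display)
  (Om : measurableType d) (P : probability Om R)
  (Y : nat -> Om -> S) (X : nat -> Om -> Xs).
Hypothesis hmm : is_HMM pi trans f P lam Y X.

Lemma hmm_path_event_measurable n (s : 'I_n -> S) (B : 'I_n -> set Xs) :
  (forall t, measurable (B t)) ->
  measurable [set w | forall t : 'I_n, Y t w = s t /\ B t (X t w)].
Proof.
have [_ _ _ [Y_mes X_mes] _] := hmm; move=> B_mes.
rewrite [X in measurable X](_ : _ =
  \bigcap_(t in [set: 'I_n]) ([set w | Y t w = s t] `&` X t @^-1` B t)).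
  apply: fin_bigcap_measurable => // t _; apply: measurableI => //.
  by rewrite -[_ @^-1` _]setTI; exact: X_mes.
by apply/seteqP; split=> w /= Hw t; [move=> _|]; exact: Hw.
Qed.

Lemma ae_path_prior_gt0 n (s : 'I_n -> S) :
  {ae P, forall w, (forall t : 'I_n, Y t w = s t) -> 0 < pS pi trans s}.
Proof.
have [[pi_ge0 _] [trans_ge0 _] _ _ hmm_law] := hmm.
have [pS_gt0|pS_le0] := ltP 0 (pS pi trans s); first exact: nearW.
have pS0 : pS pi trans s = 0 by apply/le_anti; rewrite pS_le0 pS_ge0.
apply: (ae_of_null_set (hmm_path_event_measurable s (fun=> measurableT))).
  by apply: eq_trans (hmm_law _ _ _ (fun=> measurableT)) _; rewrite pS0 mul0e.
by move=> w /not_implyP[Ys _] t.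
Qed.

(* The event {Y^n = s, f_{s_t}(X_t) = 0} has probability
   p(s) * ... * int_{f_{s_t} = 0} f_{s_t} dlam * ... = 0. *)
Lemma ae_path_emission_gt0 n (s : 'I_n -> S) (t : 'I_n) :
  {ae P, forall w, (forall t : 'I_n, Y t w = s t) -> 0 < f (s t) (X t w)}.
Proof.
have [_ _ [f_mes [f_ge0 _]] _ hmm_law] := hmm.
pose B t' := if t' == t then [set z | f (s t) z = 0] else setT.
have B_mes t' : measurable (B t').
  rewrite /B; case: ifP => _ //.
  by rewrite -[X in measurable X]setTI; exact: f_mes (measurable_set1 _).
apply: (ae_of_null_set (hmm_path_event_measurable s B_mes)).
  apply: eq_trans (hmm_law _ _ _ B_mes) _.
  rewrite (bigD1 t) //= integral0_eq ?mul0e ?mule0 // => z.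
  by rewrite /B eqxx => ->.
move=> w /not_implyP[Ys f_not_gt0] t'; split=> //.
rewrite /B; case: eqP => [->|] //=; apply/eqP.
by rewrite eq_le f_ge0 andbT leNgt; exact/negP.
Qed.

Lemma ae_true_path_supported T :
  {ae P, forall w, 0 < pS pi trans [ffun t : 'I_T => Y t w] /\
                   forall t : 'I_T, 0 < f (Y t w) (X t w)}.
Proof.
have ae_paths : {ae P, forall w, forall s : {ffun 'I_T -> S},
    (forall t : 'I_T, Y t w = s t) ->
    0 < pS pi trans s /\ forall t : 'I_T, 0 < f (s t) (X t w)}.
  apply: filter_forall => s.
  have ae_emissions : {ae P, forall w, forall t : 'I_T,
      (forall t' : 'I_T, Y t' w = s t') -> 0 < f (s t) (X t w)}.
    by apply: filter_forall => t; exact: ae_path_emission_gt0.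
  apply: filterS2 (ae_path_prior_gt0 s) ae_emissions => w prior emissions Ys.
  by split=> [|t]; [exact: prior | exact: emissions].
apply: filterS ae_paths => w /(_ [ffun t : 'I_T => Y t w]) [t|].
  by rewrite ffunE.
by move=> pS_gt0 f_gt0; split=> // t; have := f_gt0 t; rewrite ffunE.
Qed.

End TruePath.

Theorem proposition1 (R : realType) (S : finType)
  (pi : S -> R) (trans : nat -> S -> S -> R)
  (d' : measure_display) (Xs : measurableType d') (f : S -> Xs -> R)
  (lam : {measure set Xs -> \bar R})
  (d : measure_display) (Om : measurableType d) (P : probability Om R)
  (Y : nat -> Om -> S) (X : nat -> Om -> Xs)
  (T : nat) (C1 C2 C3 C4 : R) :
  (1 < #|S|)%N ->
  is_HMM pi trans f P lam Y X ->
  (0 < T)%N ->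
  0 < C1 -> 0 <= C2 -> 0 <= C3 -> 0 < C4 ->
  {ae P, forall w,
    let x := fun t : 'I_T => X t w in
    (\big[Order.min/+oo%E]_(s : {ffun 'I_T -> S})
        comb_risk pi trans f C1 C2 C3 C4 x s < +oo)%E /\
    forall s : {ffun 'I_T -> S},
      (forall s' : {ffun 'I_T -> S},
         comb_risk pi trans f C1 C2 C3 C4 x s
         <= comb_risk pi trans f C1 C2 C3 C4 x s')%E ->
      0 < post pi trans f x s}.
Proof.
move=> _ hmm T_gt0 C1_gt0 C2_ge0 C3_ge0 C4_gt0.
have [[pi_ge0 _] [trans_ge0 _] [_ [f_ge0 _]] _ _] := hmm.
apply: filterS (ae_true_path_supported hmm T) => w [pS_gt0 f_gt0] /=.
apply: (comb_risk_minimizer_admissible pi_ge0 trans_ge0 f_ge0 T_gt0 C1_gt0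
  C2_ge0 C3_ge0 C4_gt0 pS_gt0) => t.
by rewrite ffunE.
Qed.
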